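(* There is a constant $K>0$ such that for every $n\in\mathbb{N}$ (with $n\ge 2$) there exists a non-trivial word $w_n\in\mathbb{F}_2$ of length at most $K\cdot\log(n)^{\log_\varphi(2)}$ which is a law for every nilpotent group of order at most $n$, where $\varphi$ is the golden ratio.
   Context: $\mathbb{F}_2$ is the free group on two generators with word length relative to the free generators and their inverses. A word $w\in\mathbb{F}_2$ is a law for a group $G$ if $w(g,h)=1$ for all $g,h\in G$, where $w(g,h)$ is obtained by substituting $g,h$ for the generators. *)

From mathcomp Require Import all_boot all_fingroup all_solvable.
From Stdlib Require Import Reals.

Set Implicit Arguments.
Unset Strict Implicit.
Unset Printing Implicit Defensive.

(* A letter of the free group F_2 = <a, b>:
   first component: false = generator a, true = generator b;
   second component: false = the generator itself, true = its inverse. *)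
Definition letter := (bool * bool)%type.

Definition cancels (x y : letter) : bool := (x.1 == y.1) && (x.2 != y.2).

(* Elements of F_2 are represented by freely reduced words. *)
Definition reduced (w : seq letter) : bool :=
  match w with
  | [::] => true
  | x :: s => path (fun x y => ~~ cancels x y) x s
  end.

(* A non-trivial element of F_2: a nonempty reduced word.
   Its word length w.r.t. {a, b, a^-1, b^-1} is then its size. *)
Definition nontrivial_word (w : seq letter) : bool :=
  reduced w && (size w != 0%N).

Open Scope group_scope.

Definition letter_val (gT : finGroupType) (g h : gT) (l : letter) : gT :=
  let x := if l.1 then h else g in
  if l.2 then x^-1 else x.

Definition eval_word (gT : finGroupType) (g h : gT) (w : seq letter) : gT :=
  foldr (fun l acc => letter_val g h l * acc) 1 w.

Definition is_law (gT : finGroupType) (G : {group gT}) (w : seq letter) : Prop :=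
  forall g h, g \in G -> h \in G -> eval_word g h w = 1.

Close Scope group_scope.

Definition phi_golden : R := ((1 + sqrt 5) / 2)%R.

From mathcomp Require Import all_boot all_fingroup all_solvable.
From Stdlib Require Import Reals Lra.
(* Reals rebinds [^] on nat to [Nat.pow]; restore ssrnat's [expn]. *)
Import ssrnat.

Set Implicit Arguments.
Unset Strict Implicit.
Unset Printing Implicit Defensive.

(* Iterate (x, y) |-> ((x y)^-1, y x) from the pair of generators (a, b).
   Since x_{k+1} y_{k+1} = [x_k y_k, x_k] and [L_i, L_j] <= L_(i+j) for the
   lower central series, x_k y_k lies in L_(fib (k+2)), while as a word it has
   length 2^(k+1).  A nilpotent group of order at most n has class at most
   log_2 n, so x_k y_k is a law as soon as fib (k+2) > log_2 n, which happens
   for k close to log_phi log_2 n; this gives length O((log n)^(log_phi 2)).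
   The word is not trivial because under a suitable pair of 5-cycles of S_5 the
   iteration is 3-periodic and x_k y_k never evaluates to 1. *)

Definition flip (l : letter) : letter := (l.1, ~~ l.2).

Definition winv (w : seq letter) : seq letter := rev (map flip w).

Fixpoint freduce (w : seq letter) : seq letter :=
  match w with
  | [::] => [::]
  | x :: s =>
      match freduce s with
      | y :: t => if cancels x y then t else x :: y :: t
      | [::] => [:: x]
      end
  end.

Lemma size_freduce w : size (freduce w) <= size w.
Proof.
elim: w => //= x s; case: (freduce s) => [|y t] //= IHs.
by case: ifP => _ //=; rewrite leqW // ltnW.
Qed.

Lemma reduced_freduce w : reduced (freduce w).
Proof.
elim: w => //= x s; case: (freduce s) => [|y t] //= IHs.
case: ifP => [_ | /= -> //]; by case: t IHs => //= z u /andP[].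
Qed.

Definition word_step (p : seq letter * seq letter) : seq letter * seq letter :=
  (winv (p.1 ++ p.2), p.2 ++ p.1).

Definition fib_words n : seq letter * seq letter :=
  iter n word_step ([:: (false, false)], [:: (true, false)]).

Definition fib_law n : seq letter := freduce ((fib_words n).1 ++ (fib_words n).2).

Lemma size_fib_words n :
  size (fib_words n).1 = 2 ^ n /\ size (fib_words n).2 = 2 ^ n.
Proof.
elim: n => [|n [IH1 IH2]] //=.
by rewrite /winv size_rev size_map !size_cat IH1 IH2 expnS mul2n -addnn.
Qed.

Lemma size_fib_law n : size (fib_law n) <= 2 ^ n.+1.
Proof.
have [s1 s2] := size_fib_words n.
by rewrite (leq_trans (size_freduce _)) // size_cat s1 s2 expnS mul2n -addnn.
Qed.

Section Evaluation.
Local Open Scope group_scope.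
Variables (gT : finGroupType) (g h : gT).

Definition fib_step (p : gT * gT) : gT * gT := ((p.1 * p.2)^-1, p.2 * p.1).

Lemma eval_cat s t : eval_word g h (s ++ t) = eval_word g h s * eval_word g h t.
Proof. by elim: s => [|x s IHs] /=; rewrite ?mul1g // IHs mulgA. Qed.

Lemma eval_winv w : eval_word g h (winv w) = (eval_word g h w)^-1.
Proof.
elim: w => [|x s IHs] /=; first by rewrite invg1.
rewrite /winv map_cons rev_cons -cats1 eval_cat -/(winv s) IHs /= mulg1 invMg.
by case: x => [[] []]; rewrite /letter_val /= ?invgK.
Qed.

Lemma eval_freduce w : eval_word g h (freduce w) = eval_word g h w.
Proof.
elim: w => //= x s <-; case: (freduce s) => [|y t] //=; case: ifP => //.
rewrite mulgA; case: x y => [a b] [c d] /andP[/= /eqP <-].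
by case: b; case: d => //= _; rewrite /letter_val /= ?mulVg ?mulgV mul1g.
Qed.

Lemma eval_fib_words n :
  (eval_word g h (fib_words n).1, eval_word g h (fib_words n).2)
  = iter n fib_step (g, h).
Proof.
elim: n => [|n IHn] /=; first by rewrite !mulg1.
by rewrite -IHn eval_winv !eval_cat.
Qed.

Lemma eval_fib_law n :
  eval_word g h (fib_law n) =
  (iter n fib_step (g, h)).1 * (iter n fib_step (g, h)).2.
Proof. by rewrite eval_freduce eval_cat -eval_fib_words. Qed.

End Evaluation.

Fixpoint fib n : nat :=
  match n with
  | 0 => 0
  | 1 => 1
  | (k.+1 as m).+1 => fib m + fib k
  end.

Lemma ltn_fib n : n < fib n.+2.
Proof.
suff: n < fib n.+2 /\ n.+1 < fib n.+3 by case.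
elim: n => [|n [IH1 IH2]] //; split => //.
have -> : fib n.+4 = fib n.+3 + fib n.+2 by [].
by apply: leq_trans (leq_add IH2 IH1); rewrite addnS ltnS leq_addr.
Qed.

Section LowerCentralSeries.
Local Open Scope group_scope.
Variable gT : finGroupType.
Implicit Types (G H K N W : {group gT}).

Lemma three_subgroup_normal W N G H K :
    N <| W -> G \subset W -> H \subset W -> K \subset W ->
  [~: G, H, K] \subset N -> [~: H, K, G] \subset N -> [~: K, G, H] \subset N.
Proof.
move=> /normal_norm nNW sGW sHW sKW.
have quo_comm3 (A B C : {set gT}) : A \subset W -> B \subset W -> C \subset W ->
    ([~: A, B, C] \subset N) = ([~: A / N, B / N, C / N] \subset [1]).
  move=> sAW sBW sCW; have sRW := comm_subG (comm_subG sAW sBW) sCW.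
  rewrite -quotient_sub1 ?(subset_trans sRW) // !quotientR //.
  - exact: subset_trans sAW nNW.
  - exact: subset_trans sBW nNW.
  - exact: subset_trans (comm_subG sAW sBW) nNW.
  - exact: subset_trans sCW nNW.
rewrite !quo_comm3 // => /trivgP cGHK /trivgP cHKG.
by apply/trivgP; apply: three_subgroup.
Qed.

Lemma lcn_comm W i j : [~: 'L_i(W), 'L_j(W)] \subset 'L_(i + j)(W).
Proof.
case: i => [|i]; first by rewrite commg_subr lcn_norm.
case: j => [|j]; first by rewrite addn0 commg_subl lcn_norm.
rewrite addSn addnS; elim: j i => [|j IHj] i; first by rewrite addn0.
rewrite lcnSn commGC.
apply: (three_subgroup_normal (lcn_normal _ W) (subxx W)); rewrite ?lcn_sub //.
- by rewrite (commGC W) -lcnSn -addSnnS IHj.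
- by rewrite (subset_trans (commSg _ (IHj i))) // addnS.
Qed.

Lemma mem_commg_lcn W i j x y :
  x \in 'L_i(W) -> y \in 'L_j(W) -> [~ x, y] \in 'L_(i + j)(W).
Proof. by move=> xLi yLj; apply: (subsetP (lcn_comm W i j)); apply: mem_commg. Qed.

Lemma iter_fib_step_lcn W g h n : g \in W -> h \in W ->
  let p := iter n (@fib_step gT) (g, h) in
  [/\ p.1 \in 'L_(fib n.+1)(W), p.1 * p.2 \in 'L_(fib n.+2)(W) & p.2 \in W].
Proof.
move=> gW hW; elim: n => [|n IHn] /=; first by rewrite groupM.
case: (iter n _ _) IHn => x y /= [xL xyL yW]; split.
- by rewrite groupV.
- have -> : (x * y)^-1 * (y * x) = [~ x * y, x] by rewrite commgEl invMg !mulgA mulgKV.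
  exact: mem_commg_lcn.
- by rewrite groupM // (subsetP (lcn_sub _ W) x xL).
Qed.

Lemma exp2_nil_class_leq_card G : nilpotent G -> 2 ^ nil_class G <= #|G|.
Proof.
move=> nilG; suff le_k k : k <= nil_class G -> 2 ^ k * #|'L_k.+1(G)| <= #|G|.
  by rewrite (leq_trans _ (le_k _ (leqnn _))) // leq_pmulr.
elim: k => [|k IHk] lt_k_c; first by rewrite mul1n.
have ntL : 'L_k.+1(G) != 1.
  by apply: contraTneq lt_k_c => /(lcn_nil_classP k nilG); rewrite -ltnNge.
have ltL : 'L_k.+2(G) \proper 'L_k.+1(G).
  rewrite lcnSn (nil_comm_properl nilG) ?lcn_sub //.
  by rewrite subsetI subxx lcn_norm.
have dbl : 2 * #|'L_k.+2(G)| <= #|'L_k.+1(G)|.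
  rewrite -(Lagrange (proper_sub ltL)) mulnC leq_pmul2l // indexg_gt1.
  exact: proper_subn.
by rewrite (leq_trans _ (IHk (ltnW lt_k_c))) // expnS -mulnA mulnCA leq_pmul2l ?expn_gt0.
Qed.

End LowerCentralSeries.

Lemma fib_law_is_law (gT : finGroupType) (G : {group gT}) n :
  nilpotent G -> nil_class G < fib n.+2 -> is_law G (fib_law n).
Proof.
move=> nilG lt_c_fib g h gG hG; rewrite eval_fib_law.
have [_ xyL _] := iter_fib_step_lcn n gG hG.
move: xyL lt_c_fib; case: (fib n.+2) => // k xyL /(lcn_nil_classP k nilG) L1.
by move: xyL; rewrite L1 => /set1P.
Qed.

Lemma iter_period T (f : T -> T) k x n :
  iter k f x = x -> iter n f x = iter (n %% k) f x.
Proof.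
move=> fkx; rewrite {1}(divn_eq n k) addnC iterD; congr iter.
by elim: (n %/ k) => //= q IHq; rewrite mulSn iterD IHq.
Qed.

Definition perm5 (s : seq nat) (i : 'I_5) : 'I_5 :=
  Ordinal (ltn_pmod (nth 0 s i) (isT : 0 < 5)).

Lemma perm5K s t :
  all (fun i => nth 0 t (nth 0 s i %% 5) %% 5 == i) (iota 0 5) ->
  cancel (perm5 s) (perm5 t).
Proof. by move=> /allP st [i lti]; apply: val_inj; apply/eqP/st; rewrite mem_iota. Qed.

Definition g5 : 'S_5 :=
  perm (can_inj (@perm5K [:: 1; 2; 3; 4; 0] [:: 4; 0; 1; 2; 3] isT)).
Definition g5' : 'S_5 :=
  perm (can_inj (@perm5K [:: 4; 0; 1; 2; 3] [:: 1; 2; 3; 4; 0] isT)).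
Definition h5 : 'S_5 :=
  perm (can_inj (@perm5K [:: 1; 3; 0; 4; 2] [:: 2; 0; 4; 1; 3] isT)).
Definition h5' : 'S_5 :=
  perm (can_inj (@perm5K [:: 2; 0; 4; 1; 3] [:: 1; 3; 0; 4; 2] isT)).

Section FibStepInS5.
Local Open Scope group_scope.

Lemma g5V : g5^-1 = g5'.
Proof.
by apply/eqP; rewrite eq_invg_mul; apply/eqP/permP => i; rewrite permM !permE perm5K.
Qed.

Lemma h5V : h5^-1 = h5'.
Proof.
by apply/eqP; rewrite eq_invg_mul; apply/eqP/permP => i; rewrite permM !permE perm5K.
Qed.

Lemma fib_step3_g5h5 : iter 3 (@fib_step _) (g5, h5) = (g5, h5).
Proof.
rewrite /= /fib_step /= !invMg !invgK g5V h5V; congr pair.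
all: by apply/permP => -[[|[|[|[|[|?]]]]] ?] //; apply: val_inj; rewrite !permM !permE.
Qed.

Lemma fib_step_g5h5_neq1 n :
  (iter n (@fib_step _) (g5, h5)).1 * (iter n (@fib_step _) (g5, h5)).2 != 1.
Proof.
rewrite (iter_period _ fib_step3_g5h5); have : n %% 3 < 3 by rewrite ltn_pmod.
case: (n %% 3) => [|[|[|//]]] _; rewrite /= /fib_step /= ?invMg ?invgK ?g5V ?h5V.
all: by apply/eqP => /permP/(_ (Ordinal (isT : 0 < 5))); rewrite !permM !permE => /(congr1 val).
Qed.

End FibStepInS5.

Lemma fib_law_nontrivial n : nontrivial_word (fib_law n).
Proof.
rewrite /nontrivial_word reduced_freduce size_eq0; apply/eqP => law0.
by have := fib_step_g5h5_neq1 n; rewrite -eval_fib_law law0 eqxx.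
Qed.

Lemma nat_bracket (f : nat -> nat) n :
  f 0 <= n -> (exists k, n < f k) -> exists k, f k <= n < f k.+1.
Proof.
move=> f0n [k nfk].
have ex_k : exists k, n < f k.+1.
  by case: k nfk => [|k] nfk; [rewrite ltnNge f0n in nfk | exists k].
case: (ex_minnP ex_k) => m nfm min_m; exists m; rewrite nfm andbT.
case: m nfm min_m => [//|m] _ min_m.
by rewrite leqNgt; apply/negP => /min_m; rewrite ltnn.
Qed.

Section GoldenRatio.
Local Open Scope R_scope.

Lemma phi_golden_gt1 : 1 < phi_golden.
Proof.
have s5 : sqrt 5 * sqrt 5 = 5 by apply: sqrt_sqrt; lra.
by rewrite /phi_golden; have := sqrt_pos 5; nra.
Qed.

Lemma phi_golden_sq : phi_golden * phi_golden = phi_golden + 1.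
Proof.
have s5 : sqrt 5 * sqrt 5 = 5 by apply: sqrt_sqrt; lra.
by rewrite /phi_golden; nra.
Qed.

Lemma phi_golden_pow_le_fib k : phi_golden ^ k <= INR (fib k.+2).
Proof.
suff: phi_golden ^ k <= INR (fib k.+2) /\ phi_golden ^ k.+1 <= INR (fib k.+3) by case.
have phi_le2 : phi_golden <= 2 by have := phi_golden_sq; have := phi_golden_gt1; nra.
elim: k => [|k [IH1 IH2]]; first by rewrite /=; lra.
split => //; rewrite (_ : fib k.+4 = fib k.+3 + fib k.+2)%N // plus_INR.
have -> : phi_golden ^ k.+2 = phi_golden ^ k.+1 + phi_golden ^ k.
  by rewrite /= -Rmult_assoc phi_golden_sq; ring.
lra.
Qed.

Lemma ln2_gt0 : 0 < ln 2.
Proof. by rewrite -ln_1; apply: ln_increasing; lra. Qed.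

Lemma ln_phi_golden_gt0 : 0 < ln phi_golden.
Proof. by have := phi_golden_gt1; rewrite -ln_1; apply: ln_increasing; lra. Qed.

Lemma Rpower_phi_golden_pow k :
  Rpower (phi_golden ^ k) (ln 2 / ln phi_golden) = 2 ^ k.
Proof.
have phi1 := phi_golden_gt1; have lnphi := ln_phi_golden_gt0.
rewrite -[2 ^ k]Rpower_pow; last lra.
rewrite /Rpower ln_pow; last lra.
by congr exp; field; lra.
Qed.

Lemma INR_exp2 k : INR (2 ^ k) = 2 ^ k.
Proof. by elim: k => //= k IHk; rewrite expnS mult_INR IHk /=; ring. Qed.

Lemma le_log2 q n : (2 ^ q <= n)%N -> INR q <= ln (INR n) / ln 2.
Proof.
move=> /leP/le_INR; rewrite INR_exp2 => le_2q_n.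
have l2 := ln2_gt0.
have pos_2q : 0 < 2 ^ q by apply: pow_lt; lra.
apply: Rnot_lt_le => lt_log; suff : INR n < 2 ^ q by lra.
apply: ln_lt_inv; [lra | lra | rewrite ln_pow; last lra].
have := Rmult_lt_compat_r _ _ _ l2 lt_log.
by rewrite /Rdiv Rmult_assoc Rinv_l ?Rmult_1_r //; lra.
Qed.

Lemma exp2_le_Rpower_ln k n : (2 ^ fib k.+2 <= n)%N ->
  INR (2 ^ k.+2) <=
  4 * Rpower (/ ln 2) (ln 2 / ln phi_golden) *
  Rpower (ln (INR n)) (ln 2 / ln phi_golden).
Proof.
move=> /le_log2 le_fib_log; have l2 := ln2_gt0; have lnphi := ln_phi_golden_gt0.
have le_phi_log := Rle_trans _ _ _ (phi_golden_pow_le_fib k) le_fib_log.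
have pos_phi_k : 0 < phi_golden ^ k.
  by apply: pow_lt; have := phi_golden_gt1; lra.
have pos_ln : 0 < ln (INR n).
  have -> : ln (INR n) = ln (INR n) / ln 2 * ln 2 by field; lra.
  by apply: Rmult_lt_0_compat; lra.
rewrite INR_exp2 Rmult_assoc Rpower_mult_distr //; last exact: Rinv_0_lt_compat.
have -> : 2 ^ k.+2 = 4 * 2 ^ k by rewrite /=; ring.
apply: Rmult_le_compat_l; first lra.
rewrite -Rpower_phi_golden_pow Rmult_comm; apply: Rle_Rpower_l; last lra.
by apply: Rlt_le; apply: Rdiv_lt_0_compat.
Qed.

End GoldenRatio.

Theorem corollary2p7 :
  exists K : R, (0 < K)%R /\
    forall n : nat, (2 <= n)%N ->
      exists w : seq letter,
        nontrivial_word w /\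
        (INR (size w) <= K * Rpower (ln (INR n)) (ln 2 / ln phi_golden))%R /\
        forall (gT : finGroupType) (G : {group gT}),
          nilpotent G -> (#|G| <= n)%N -> is_law G w.
Proof.
exists (4 * Rpower (/ ln 2) (ln 2 / ln phi_golden))%R; split.
  by have := exp_pos ((ln 2 / ln phi_golden) * ln (/ ln 2)); rewrite /Rpower; lra.
move=> n n2; have [k /andP[le_n lt_n]] : exists k, 2 ^ fib k.+2 <= n < 2 ^ fib k.+3.
  apply: (@nat_bracket (fun k => 2 ^ fib k.+2)) => //; exists n.
  exact: leq_trans (ltn_expl n (ltnSn 1)) (leq_pexp2l _ (ltnW (ltn_fib n))).
exists (fib_law k.+1); split; [exact: fib_law_nontrivial | split].
  apply: Rle_trans (exp2_le_Rpower_ln le_n).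
  by apply/le_INR/leP; apply: size_fib_law.
move=> gT G nilG le_G_n; apply: fib_law_is_law; first exact: nilG.
rewrite -(ltn_exp2l _ _ (ltnSn 1)).
exact: leq_ltn_trans (exp2_nil_class_leq_card nilG) (leq_ltn_trans le_G_n lt_n).
Qed.
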